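(* Fix $a>0$. Let $f\in C^\infty(\mathbb{T})$ be even and nonnegative with $f(0)=0$ and $f'\ge 0$ on $[0,\pi)$. Then for all $0<x\le \pi/2$, \[ H_a f(x) \le \int_0^{2x} f'(y)\,G_a(x,y)\,dy, \] where \[ G_a(x,y) := \frac{1}{2\pi}\log\left(\frac{1+\frac{a^2}{x^2}}{1+\frac{a^2}{(x-y)^2}}\cdot\frac{1+\frac{a^2}{(2\pi-x)^2}}{1+\frac{a^2}{(x-y+2\pi\,\mathrm{sgn}(y-x))^2}}\right). \]
   Context: $\mathbb{T}=[-\pi,\pi)$ is the circle; functions on $\mathbb{T}$ are identified with $2\pi$-periodic functions on $\mathbb{R}$, and $C^\infty(\mathbb{T})$ denotes smooth $2\pi$-periodic functions with all derivatives bounded. For $a>0$, $H_a f(x) := \mathrm{P.V.}\int_{\mathbb{R}} f(x-y)K_a(y)\,dy$ with $K_a(y) := \frac{a^2}{\pi y(y^2+a^2)}$, applied to the periodic extension of $f$. *)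

From Stdlib Require Import Reals.
From Coquelicot Require Import Coquelicot.
Open Scope R_scope.

(* f in C^oo(T): 2pi-periodic function on R, smooth, all derivatives bounded *)
Definition smooth_periodic (f : R -> R) : Prop :=
  (forall x, f (x + 2 * PI) = f x) /\
  (forall n x, ex_derive_n f n x) /\
  (forall n, exists M, forall x, Rabs (Derive_n f n x) <= M).

Definition Ka (a y : R) : R := a ^ 2 / (PI * y * (y ^ 2 + a ^ 2)).

(* L is the principal value  P.V. int_R f(x-y) K_a(y) dy :
   for every eps > 0 the integral over {|y| >= eps} exists (as improper
   integrals on (-oo,-eps] and [eps,+oo)), and these tend to L as eps -> 0+. *)
Definition is_Ha (a : R) (f : R -> R) (x L : R) : Prop :=
  exists Ineg Ipos : R -> R,
    (forall eps, 0 < eps ->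
       is_RInt_gen (fun y => f (x - y) * Ka a y)
         (Rbar_locally m_infty) (at_point (- eps)) (Ineg eps) /\
       is_RInt_gen (fun y => f (x - y) * Ka a y)
         (at_point eps) (Rbar_locally p_infty) (Ipos eps)) /\
    filterlim (fun eps => Ineg eps + Ipos eps) (at_right 0) (locally L).

Definition sgn (t : R) : R := if Rlt_dec 0 t then 1 else if Rlt_dec t 0 then -1 else 0.

Definition Ga (a x y : R) : R :=
  / (2 * PI) *
  ln ((1 + a ^ 2 / x ^ 2) / (1 + a ^ 2 / (x - y) ^ 2) *
      ((1 + a ^ 2 / (2 * PI - x) ^ 2) /
       (1 + a ^ 2 / (x - y + 2 * PI * sgn (y - x)) ^ 2))).

(* Integrating by parts against the primitive [Pa a w = -(1/2pi) ln (1 + a^2/w^2)]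
   of [Ka a] and substituting [z = x - y], the integral of [f (x - y) Ka a y] over
   [x - 2 pi (N + 1) <= y <= -eps] and [eps <= y <= x + 2 pi (N + 1)] becomes the
   integral of [f' z * Pa a (x - z)] over [|z| <= 2 pi (N + 1)] with the window
   [(x - eps, x + eps)] removed, plus the boundary term
   [Pa a eps * (f (x + eps) - f (x - eps)) <= 0].  Since [f'] is
   odd and [2 pi]-periodic, the periods fold onto [[0, pi]] and the integral
   becomes [int_0^pi f'(s) W_N(s) ds], where [W_N] is an alternating sum of
   values of [Pa].  As [Pa] is even, increasing and concave on [(0, +oo)]:
   [W_N(s) <= G_a(x, s) + o(1)] on [[0, 2x]] (the sum telescopes left of [x]),
   [W_N <= 0] on [(x, pi]], and [W_N(s) - Pa a (x - s)] stays bounded near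
   [s = x].  Since [f' >= 0] on [[0, pi)], letting [N -> oo] and then
   [eps -> 0] gives the inequality.  All limits exist by the Cauchy criterion,
   with majorants [C / y^2] at infinity, [2 sup|f'| / pi] for the symmetrised
   kernel near [0] (where [f (x - y) - f (x + y) = O(y)]), and
   [C / sqrt |y - x|] for [G_a]. *)

From Stdlib Require Import Reals Lra Lia Psatz.
From Coquelicot Require Import Coquelicot.
Open Scope R_scope.

(* Coquelicot states its lemmas for general (normed) modules; the [_R] instances
   below unify directly with goals about functions [R -> R]. *)

Lemma continuous_of_ex_derive (h : R -> R) y : ex_derive h y -> continuous h y.
Proof. apply (ex_derive_continuous (K := R_AbsRing) (V := R_NormedModule)). Qed.

Lemma continuous_mult_R (g h : R -> R) y :
  continuous g y -> continuous h y -> continuous (fun t => g t * h t) y.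
Proof. apply (continuous_mult g h). Qed.

Lemma continuous_plus_R (g h : R -> R) y :
  continuous g y -> continuous h y -> continuous (fun t => g t + h t) y.
Proof. apply (continuous_plus g h). Qed.

Lemma continuous_comp_R (g h : R -> R) y :
  continuous g y -> continuous h (g y) -> continuous (fun t => h (g t)) y.
Proof. apply (continuous_comp g h). Qed.

Lemma continuous_sub_arg (h : R -> R) c y :
  continuous h (c - y) -> continuous (fun t => h (c - t)) y.
Proof.
  apply continuous_comp_R, continuous_of_ex_derive. auto_derive. auto.
Qed.

Lemma continuous_opp_arg (h : R -> R) y :
  continuous h (- y) -> continuous (fun t => h (- t)) y.
Proof.
  apply continuous_comp_R, continuous_of_ex_derive. auto_derive. auto.
Qed.

Lemma at_left_of_interval (lo b : R) (P : R -> Prop) : lo < b ->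
  (forall y, lo < y < b -> P y) -> at_left b P.
Proof.
  intros Hlo H. exists (mkposreal _ (proj2 (Rlt_0_minus lo b) Hlo)). intros y Hy Hyb.
  change (Rabs (y - b) < b - lo) in Hy. apply Rabs_def2 in Hy. apply H. lra.
Qed.

Lemma at_right_of_interval (b hi : R) (P : R -> Prop) : b < hi ->
  (forall y, b < y < hi -> P y) -> at_right b P.
Proof.
  intros Hhi H. exists (mkposreal _ (proj2 (Rlt_0_minus b hi) Hhi)). intros y Hy Hyb.
  change (Rabs (y - b) < hi - b) in Hy. apply Rabs_def2 in Hy. apply H. lra.
Qed.

Lemma filterlim_sub_at_right (c : R) : filterlim (fun e => c - e) (at_right 0) (at_left c).
Proof.
  intros P [d HP]. exists d. intros e He He0. apply HP; [|lra].
  change (Rabs (c - e - c) < d). change (Rabs (e - 0) < d) in He.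
  replace (c - e - c) with (- (e - 0)) by ring. rewrite Rabs_Ropp. exact He.
Qed.

Lemma filterlim_add_at_right (c : R) : filterlim (fun e => c + e) (at_right 0) (at_right c).
Proof.
  intros P [d HP]. exists d. intros e He He0. apply HP; [|lra].
  change (Rabs (c + e - c) < d). change (Rabs (e - 0) < d) in He.
  replace (c + e - c) with (e - 0) by ring. exact He.
Qed.

Lemma filterlim_plus_R {T} {F : (T -> Prop) -> Prop} {FF : Filter F} (u v : T -> R) l1 l2 :
  filterlim u F (locally l1) -> filterlim v F (locally l2) ->
  filterlim (fun t => u t + v t) F (locally (l1 + l2)).
Proof.
  intros H1 H2. apply (filterlim_comp_2 u v Rplus H1 H2).
  apply (filterlim_plus (K := R_AbsRing) (V := R_NormedModule) l1 l2).
Qed.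

Lemma filterlim_affine_pinfty (c d : R) : 0 < c ->
  filterlim (fun t => c * t + d) (Rbar_locally p_infty) (Rbar_locally p_infty).
Proof.
  intros Hc P [M HP]. exists ((Rabs M + Rabs d) / c). intros t Ht. apply HP.
  assert (c * ((Rabs M + Rabs d) / c) = Rabs M + Rabs d) by (field; lra).
  assert (c * ((Rabs M + Rabs d) / c) < c * t) by (apply Rmult_lt_compat_l; lra).
  generalize (Rle_abs M) (Rle_abs (- d)). rewrite Rabs_Ropp. lra.
Qed.

Lemma is_lim_seq_affine_INR (c d : R) : 0 < c ->
  is_lim_seq (fun N => c * INR N + d) p_infty.
Proof.
  intros Hc. apply (filterlim_comp _ _ _ INR (fun t => c * t + d) _ (Rbar_locally p_infty)).
  - exact is_lim_seq_INR.
  - apply filterlim_affine_pinfty, Hc.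
Qed.

Lemma is_lim_inv_infty C (l : Rbar) : l = p_infty \/ l = m_infty -> is_lim (fun y => - C / y) l 0.
Proof.
  intros Hl. replace (Finite 0) with (Rbar_mult (- C) (Rbar_inv l))
    by (destruct Hl as [->| ->]; simpl; f_equal; ring).
  apply is_lim_scal_l, is_lim_inv; [apply is_lim_id|destruct Hl as [->| ->]; discriminate].
Qed.

Lemma periodic_INR (g : R -> R) (T : R) : (forall y, g (y + T) = g y) ->
  forall n y, g (y + T * INR n) = g y.
Proof.
  intros Hg n y. induction n as [|n IH].
  - simpl. f_equal. ring.
  - rewrite S_INR, <- IH, <- (Hg (y + T * INR n)). f_equal. ring.
Qed.

Lemma abs_sub_le_of_Derive_bound (g : R -> R) M : (forall y, ex_derive g y) ->
  (forall y, Rabs (Derive g y) <= M) -> forall u v, Rabs (g v - g u) <= M * Rabs (v - u).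
Proof.
  intros Hd HM u v.
  destruct (MVT_gen g u v (Derive g)) as [c [_ ->]].
  - intros y _. apply Derive_correct, Hd.
  - intros y _. apply continuity_pt_filterlim, continuous_of_ex_derive, Hd.
  - rewrite Rabs_mult. apply Rmult_le_compat_r; [apply Rabs_pos|apply HM].
Qed.

Lemma RInt_Chasles_R (h : R -> R) a b c :
  ex_RInt h a b -> ex_RInt h b c -> RInt h a b + RInt h b c = RInt h a c.
Proof. apply (RInt_Chasles h a b c). Qed.

Lemma RInt_plus_R (g h : R -> R) a b : ex_RInt g a b -> ex_RInt h a b ->
  RInt (fun y => g y + h y) a b = RInt g a b + RInt h a b.
Proof. apply (RInt_plus g h a b). Qed.

Lemma ex_RInt_plus_R (g h : R -> R) a b : ex_RInt g a b -> ex_RInt h a b ->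
  ex_RInt (fun y => g y + h y) a b.
Proof. apply (ex_RInt_plus (V := R_NormedModule) g h a b). Qed.

Lemma RInt_const_R (c a b : R) : RInt (fun _ => c) a b = (b - a) * c.
Proof. apply (RInt_const (V := R_CompleteNormedModule)). Qed.

Lemma ex_RInt_continuous_R (h : R -> R) a b :
  (forall y, Rmin a b <= y <= Rmax a b -> continuous h y) -> ex_RInt h a b.
Proof. apply (ex_RInt_continuous (V := R_CompleteNormedModule)). Qed.

Lemma RInt_swap_R (h : R -> R) a b : ex_RInt h a b -> RInt h b a = - RInt h a b.
Proof. intros. rewrite <- (opp_RInt_swap h a b); auto. Qed.

Lemma RInt_comp_add_R (h : R -> R) c u v : ex_RInt h (c + u) (c + v) ->
  RInt (fun y => h (c + y)) u v = RInt h (c + u) (c + v).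
Proof.
  intros Hex.
  assert (E := RInt_comp_lin h 1 c u v).
  replace (1 * u + c) with (c + u) in E by ring.
  replace (1 * v + c) with (c + v) in E by ring.
  rewrite <- (E Hex). apply RInt_ext. intros y _.
  change (h (c + y) = 1 * h (1 * y + c)). rewrite Rmult_1_l. f_equal. ring.
Qed.

Lemma RInt_comp_sub_R (h : R -> R) c u v : ex_RInt h (c - u) (c - v) ->
  RInt (fun y => h (c - y)) u v = RInt h (c - v) (c - u).
Proof.
  intros Hex.
  assert (E : is_RInt h (-1 * u + c) (-1 * v + c) (RInt h (c - u) (c - v))).
  { replace (-1 * u + c) with (c - u) by ring.
    replace (-1 * v + c) with (c - v) by ring. apply (RInt_correct h), Hex. }
  apply is_RInt_comp_lin, (is_RInt_scal _ u v (-1)) in E.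
  rewrite (RInt_swap_R h (c - u) (c - v) Hex).
  replace (- RInt h (c - u) (c - v)) with (scal (-1) (RInt h (c - u) (c - v)))
    by (change (-1 * RInt h (c - u) (c - v) = - RInt h (c - u) (c - v)); ring).
  apply is_RInt_unique, (is_RInt_ext _ _ u v _) with (2 := E).
  intros y _. change (-1 * (-1 * h (-1 * y + c)) = h (c - y)).
  replace (-1 * y + c) with (c - y) by ring. ring.
Qed.

Lemma RInt_le_const_R (h : R -> R) c u v : u <= v -> ex_RInt h u v ->
  (forall y, u < y < v -> h y <= c) -> RInt h u v <= (v - u) * c.
Proof.
  intros Huv Hex Hle. rewrite <- RInt_const_R.
  apply RInt_le; auto. apply ex_RInt_continuous_R. intros; apply continuous_const.
Qed.

Lemma is_RInt_gen_from_point (h : R -> R) (a : R) (Fb : (R -> Prop) -> Prop) {FF : Filter Fb}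
  (I : R) :
  Fb (fun b => ex_RInt h a b) -> filterlim (fun b => RInt h a b) Fb (locally I) ->
  is_RInt_gen h (at_point a) Fb I.
Proof.
  intros Hex Hlim P HP.
  apply Filter_prod with (Q := fun t => t = a) (R := fun b => ex_RInt h a b /\ P (RInt h a b)).
  - reflexivity.
  - apply filter_and; [exact Hex|apply Hlim, HP].
  - intros u v -> [H1 H2]. exists (RInt h a v). split; [exact (RInt_correct h _ _ H1)|exact H2].
Qed.

Lemma is_RInt_gen_to_point (h : R -> R) (b : R) (Fa : (R -> Prop) -> Prop) {FF : Filter Fa}
  (I : R) :
  Fa (fun a => ex_RInt h a b) -> filterlim (fun a => RInt h a b) Fa (locally I) ->
  is_RInt_gen h Fa (at_point b) I.
Proof.
  intros Hex Hlim P HP.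
  apply Filter_prod with (R := fun t => t = b) (Q := fun a => ex_RInt h a b /\ P (RInt h a b)).
  - apply filter_and; [exact Hex|apply Hlim, HP].
  - reflexivity.
  - intros u v [H1 H2] ->. exists (RInt h u b). split; [exact (RInt_correct h _ _ H1)|exact H2].
Qed.

Lemma ex_filterlim_of_increments_le {T} {F : (T -> Prop) -> Prop} {FF : ProperFilter F}
  (Psi Phi : T -> R) (l : R) (D : T -> Prop) :
  F D -> (forall u v, D u -> D v -> Rabs (Psi v - Psi u) <= Rabs (Phi v - Phi u)) ->
  filterlim Phi F (locally l) -> exists I, filterlim Psi F (locally I).
Proof.
  intros HD Hle Hl.
  apply (filterlim_locally_cauchy (U := R_CompleteSpace)). intros eps.
  assert (He : 0 < eps / 2) by (destruct eps; simpl; lra).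
  exists (fun t => D t /\ Rabs (Phi t - l) < eps / 2). split.
  - apply filter_and; [exact HD|]. apply (Hl (fun y => Rabs (y - l) < eps / 2)).
    exists (mkposreal _ He). intros y Hy. exact Hy.
  - intros u v [Du Hu] [Dv Hv]. change (Rabs (Psi v - Psi u) < eps).
    eapply Rle_lt_trans; [apply Hle; auto|].
    replace (Phi v - Phi u) with ((Phi v - l) - (Phi u - l)) by ring.
    eapply Rle_lt_trans; [apply Rabs_triang|]. rewrite Rabs_Ropp. lra.
Qed.

Section DominatedIntegrand.

Variables (h phi Phi : R -> R) (D : R -> Prop).
Hypothesis D_interval : forall u v w, D u -> D w -> u <= v <= w -> D v.
Hypothesis h_cont : forall y, D y -> continuous h y.
Hypothesis h_le : forall y, D y -> Rabs (h y) <= phi y.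
Hypothesis Phi_derive : forall y, D y -> is_derive Phi y (phi y).
Hypothesis phi_cont : forall y, D y -> continuous phi y.

Lemma ex_RInt_dominated u v : D u -> D v -> ex_RInt h u v.
Proof.
  intros Du Dv. apply ex_RInt_continuous_R. intros y Hy. apply h_cont.
  destruct (Rle_dec u v).
  - rewrite Rmin_left, Rmax_right in Hy by lra. apply (D_interval u y v); auto.
  - rewrite Rmin_right, Rmax_left in Hy by lra. apply (D_interval v y u); auto.
Qed.

Lemma abs_RInt_le_primitive u v : D u -> D v -> Rabs (RInt h u v) <= Rabs (Phi v - Phi u).
Proof.
  revert u v.
  assert (Hle : forall u v, u <= v -> D u -> D v -> Rabs (RInt h u v) <= Phi v - Phi u).
  { intros u v Huv Du Dv.
    assert (Dy : forall y, Rmin u v <= y <= Rmax u v -> D y).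
    { rewrite Rmin_left, Rmax_right by exact Huv. intros y Hy. apply (D_interval u y v); auto. }
    apply (norm_RInt_le h phi u v); auto.
    - rewrite Rmin_left, Rmax_right in Dy by exact Huv. intros y Hy. apply h_le, Dy, Hy.
    - apply (RInt_correct h), ex_RInt_dominated; auto.
    - apply (is_RInt_derive Phi phi); intros y Hy; [apply Phi_derive|apply phi_cont]; auto. }
  intros u v Du Dv. destruct (Rle_dec u v) as [Huv|Hvu].
  - eapply Rle_trans; [apply Hle; auto|apply Rle_abs].
  - rewrite <- (opp_RInt_swap h v u) by (apply ex_RInt_dominated; auto).
    rewrite Rabs_minus_sym. change (Rabs (- RInt h v u) <= Rabs (Phi u - Phi v)).
    rewrite Rabs_Ropp. eapply Rle_trans; [apply Hle; auto; lra|apply Rle_abs].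
Qed.

Lemma ex_lim_RInt_dominated {F : (R -> Prop) -> Prop} {FF : ProperFilter F} (c l : R) :
  D c -> F D -> filterlim Phi F (locally l) ->
  exists I, filterlim (fun b => RInt h c b) F (locally I).
Proof.
  intros Dc FD Hl. apply (ex_filterlim_of_increments_le _ Phi l D FD); auto.
  intros u v Du Dv. rewrite <- (RInt_Chasles_R h c u v) by (apply ex_RInt_dominated; auto).
  replace (RInt h c u + RInt h u v - RInt h c u) with (RInt h u v) by lra.
  apply abs_RInt_le_primitive; auto.
Qed.

Lemma ex_lim_RInt_dominated_swap {F : (R -> Prop) -> Prop} {FF : ProperFilter F} (c l : R) :
  D c -> F D -> filterlim Phi F (locally l) ->
  exists I, filterlim (fun a => RInt h a c) F (locally I).
Proof.
  intros Dc FD Hl. destruct (ex_lim_RInt_dominated c l Dc FD Hl) as [I HI].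
  exists (- I). apply (filterlim_ext_loc (fun b => - RInt h c b)).
  - apply (filter_imp D); auto. intros b Db. symmetry. apply RInt_swap_R, ex_RInt_dominated; auto.
  - apply filterlim_comp with (G := locally I); [exact HI|].
    apply (filterlim_opp (K := R_AbsRing) (V := R_NormedModule)).
Qed.

End DominatedIntegrand.

(** * The primitive [Pa] of the kernel [Ka] *)

Definition Pa (a w : R) : R := - / (2 * PI) * ln (1 + a ^ 2 / w ^ 2).

Lemma sqr_div_sqr_ge0 (a w : R) : 0 <= a ^ 2 / w ^ 2.
Proof.
  destruct (Req_dec w 0) as [->|Hw].
  - replace (0 ^ 2) with 0 by ring. unfold Rdiv; rewrite Rinv_0. lra.
  - apply Rmult_le_pos; [apply pow2_ge_0|].
    apply Rlt_le, Rinv_0_lt_compat, pow2_gt_0; auto.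
Qed.

Lemma Pa_opp a w : Pa a (- w) = Pa a w.
Proof. unfold Pa. do 4 f_equal. ring. Qed.

Lemma Pa_le0 a w : Pa a w <= 0.
Proof.
  unfold Pa. assert (H := sqr_div_sqr_ge0 a w).
  assert (0 <= ln (1 + a ^ 2 / w ^ 2)) by (rewrite <- ln_1; apply ln_le; lra).
  assert (0 < / (2 * PI)) by (apply Rinv_0_lt_compat; generalize PI_RGT_0; lra).
  nra.
Qed.

Lemma is_derive_Pa a w : 0 < a -> w <> 0 -> is_derive (Pa a) w (Ka a w).
Proof.
  intros Ha Hw. unfold Pa, Ka.
  assert (0 < PI) by apply PI_RGT_0.
  assert (0 < w ^ 2) by (apply pow2_gt_0; auto).
  assert (0 < a ^ 2) by (apply pow2_gt_0; lra).
  assert (0 <= a ^ 2 / w ^ 2) by apply sqr_div_sqr_ge0.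
  auto_derive.
  - repeat split; simpl in *; unfold Rdiv in *; nra.
  - simpl in *. field. repeat split; nra.
Qed.

Lemma ex_derive_Pa a w : 0 < a -> w <> 0 -> ex_derive (Pa a) w.
Proof. intros. eexists. apply is_derive_Pa; auto. Qed.

Lemma Pa_le a u v : 0 < u <= v -> Pa a u <= Pa a v.
Proof.
  intros [Hu Huv]. unfold Pa.
  assert (0 < / (2 * PI)) by (apply Rinv_0_lt_compat; generalize PI_RGT_0; lra).
  assert (a ^ 2 / v ^ 2 <= a ^ 2 / u ^ 2).
  { apply Rmult_le_compat_l; [apply pow2_ge_0|].
    apply Rinv_le_contravar; [apply pow2_gt_0; lra|apply pow_incr; lra]. }
  assert (0 <= a ^ 2 / v ^ 2) by apply sqr_div_sqr_ge0.
  assert (ln (1 + a ^ 2 / v ^ 2) <= ln (1 + a ^ 2 / u ^ 2)) by (apply ln_le; lra).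
  nra.
Qed.

Lemma Ka_opp a w : Ka a (- w) = - Ka a w.
Proof.
  unfold Ka. destruct (Req_dec w 0) as [->|Hw].
  - rewrite Ropp_0. unfold Rdiv. rewrite !Rmult_0_r, Rmult_0_l, Rinv_0. ring.
  - destruct (Req_dec a 0) as [->|Ha]; [unfold Rdiv; simpl; ring|].
    assert (0 < PI) by apply PI_RGT_0.
    field. repeat split; try lra. nra.
Qed.

Lemma Ka_le a u v : 0 < u <= v -> Ka a v <= Ka a u.
Proof.
  intros [Hu Huv]. unfold Ka.
  assert (0 < PI) by apply PI_RGT_0.
  assert (u ^ 2 <= v ^ 2) by (apply pow_incr; lra).
  assert (0 < u ^ 2 + a ^ 2) by (generalize (pow2_ge_0 a) (pow2_gt_0 u); intros; nra).
  apply Rmult_le_compat_l; [apply pow2_ge_0|].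
  apply Rinv_le_contravar.
  - apply Rmult_lt_0_compat; nra.
  - apply Rmult_le_compat; nra.
Qed.

Lemma Ka_bounds a y : 0 < y -> 0 <= Ka a y <= / (PI * y).
Proof.
  intros Hy. assert (0 < PI) by apply PI_RGT_0. unfold Ka.
  assert (0 <= a ^ 2) by apply pow2_ge_0. assert (0 < y ^ 2) by (apply pow2_gt_0; lra).
  assert (0 < PI * y) by nra.
  split; [apply Rmult_le_pos; [lra|apply Rlt_le, Rinv_0_lt_compat; nra]|].
  replace (a ^ 2 / (PI * y * (y ^ 2 + a ^ 2))) with (/ (PI * y) * (a ^ 2 / (y ^ 2 + a ^ 2)))
    by (field; nra).
  rewrite <- (Rmult_1_r (/ (PI * y))) at 2.
  apply Rmult_le_compat_l; [apply Rlt_le, Rinv_0_lt_compat; lra|].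
  apply Rmult_le_reg_r with (y ^ 2 + a ^ 2); [nra|].
  unfold Rdiv. rewrite Rmult_assoc, Rinv_l by nra. nra.
Qed.

Lemma Ka_le_inv_sqr a eps y : 0 < eps <= y -> Ka a y <= a ^ 2 / (PI * eps) / y ^ 2.
Proof.
  intros Hy. assert (0 < PI) by apply PI_RGT_0. unfold Ka.
  assert (0 <= a ^ 2) by apply pow2_ge_0. assert (0 < y ^ 2) by (apply pow2_gt_0; lra).
  replace (a ^ 2 / (PI * eps) / y ^ 2) with (a ^ 2 / (PI * eps * y ^ 2)) by (field; nra).
  apply Rmult_le_compat_l; [lra|].
  apply Rinv_le_contravar; [apply Rmult_lt_0_compat; nra|].
  assert (eps * y ^ 2 <= y * (y ^ 2 + a ^ 2)) by nra. nra.
Qed.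

(* Concavity of [Pa] on (0, +oo): its derivative [Ka] decreases there. *)
Lemma Pa_increment_le a al be h : 0 < a -> 0 < al <= be -> 0 <= h ->
  Pa a (be + h) - Pa a be <= Pa a (al + h) - Pa a al.
Proof.
  intros Ha Hab Hh.
  set (g := fun t => Pa a (t + h) - Pa a t).
  assert (Hd : forall t, 0 < t -> is_derive g t (Ka a (t + h) - Ka a t)).
  { intros t Ht. apply (is_derive_minus (fun t => Pa a (t + h)) (Pa a)).
    - replace (Ka a (t + h)) with (1 * Ka a (t + h)) by ring.
      apply (is_derive_comp (Pa a) (fun t => t + h)).
      + apply is_derive_Pa; lra.
      + auto_derive; auto; ring.
    - apply is_derive_Pa; lra. }
  destruct (MVT_gen g al be (fun t => Ka a (t + h) - Ka a t)) as [c [Hc Heq]].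
  - intros t Ht. apply Hd. rewrite Rmin_left in Ht by lra. lra.
  - intros t Ht. rewrite Rmin_left in Ht by lra. apply continuity_pt_filterlim.
    apply continuous_of_ex_derive. eexists. apply Hd. lra.
  - rewrite Rmin_left, Rmax_right in Hc by lra.
    assert (Ka a (c + h) <= Ka a c) by (apply Ka_le; lra).
    unfold g in Heq. nra.
Qed.

Lemma ln_1p_le u : 0 <= u -> ln (1 + u) <= u.
Proof.
  intros Hu. rewrite <- (ln_exp u) at 2. apply ln_le; [lra|apply exp_ineq1_le].
Qed.

Lemma ln_div_mul_div A B C D : 0 < A -> 0 < B -> 0 < C -> 0 < D ->
  ln (A / B * (C / D)) = ln A - ln B + ln C - ln D.
Proof.
  intros. unfold Rdiv.
  assert (0 < / B) by (apply Rinv_0_lt_compat; auto).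
  assert (0 < / D) by (apply Rinv_0_lt_compat; auto).
  rewrite !ln_mult, !ln_Rinv; auto; try ring; apply Rmult_lt_0_compat; auto.
Qed.

Lemma Pa_opp_le_inv_sqr a w : 0 < w -> - Pa a w <= a ^ 2 / (2 * PI * w ^ 2).
Proof.
  intros Hw. unfold Pa.
  assert (0 < PI) by apply PI_RGT_0.
  assert (0 <= a ^ 2 / w ^ 2) by apply sqr_div_sqr_ge0.
  assert (ln (1 + a ^ 2 / w ^ 2) <= a ^ 2 / w ^ 2) by (apply ln_1p_le; auto).
  replace (a ^ 2 / (2 * PI * w ^ 2)) with (/ (2 * PI) * (a ^ 2 / w ^ 2)) by (field; lra).
  assert (0 < / (2 * PI)) by (apply Rinv_0_lt_compat; lra).
  nra.
Qed.

(* With [r = sqrt (a / w)]: [1 + r^4 <= (1 + r)^4] and [ln (1 + r) <= r]. *)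
Lemma Pa_opp_le_inv_sqrt a w : 0 < a -> 0 < w -> - Pa a w <= 2 / PI * (sqrt a / sqrt w).
Proof.
  intros Ha Hw. unfold Pa.
  assert (0 < PI) by apply PI_RGT_0.
  rewrite <- sqrt_div_alt by lra.
  set (r := sqrt (a / w)).
  assert (Hr0 : 0 <= r) by apply sqrt_pos.
  assert (Hr2 : r * r = a / w) by (apply sqrt_sqrt, Rlt_le, Rdiv_lt_0_compat; lra).
  assert (Hv : a ^ 2 / w ^ 2 = (r * r) * (r * r)) by (rewrite Hr2; field; lra).
  assert (H1 : ln (1 + a ^ 2 / w ^ 2) <= 4 * r).
  { rewrite Hv. apply Rle_trans with (ln ((1 + r) ^ 4)).
    - apply ln_le; nra.
    - rewrite ln_pow by lra. simpl INR.
      assert (ln (1 + r) <= r) by (apply ln_1p_le; auto). lra. }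
  assert (0 < / (2 * PI)) by (apply Rinv_0_lt_compat; lra).
  replace (2 / PI * r) with (/ (2 * PI) * (4 * r)) by (field; lra).
  nra.
Qed.

Lemma is_lim_seq_Pa_opp a : is_lim_seq (fun N => - Pa a (2 * PI * INR N + PI)) 0.
Proof.
  assert (0 < PI) by apply PI_RGT_0.
  set (c := a ^ 2 / (2 * PI * PI)).
  assert (Hinv : is_lim_seq (fun N => c * / (2 * PI * INR N + PI)) 0).
  { replace (Finite 0) with (Rbar_mult c (Rbar_inv p_infty)) by (simpl; f_equal; ring).
    apply is_lim_seq_scal_l, is_lim_seq_inv; [apply is_lim_seq_affine_INR; lra|discriminate]. }
  apply (is_lim_seq_le_le (fun _ => 0) _ (fun N => c * / (2 * PI * INR N + PI)) 0);
    [|apply is_lim_seq_const|exact Hinv].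
  intros N. set (w := 2 * PI * INR N + PI).
  assert (Hw : PI <= w) by (unfold w; generalize (pos_INR N); nra).
  split; [generalize (Pa_le0 a w); lra|].
  eapply Rle_trans; [apply Pa_opp_le_inv_sqr; lra|].
  unfold c. replace (a ^ 2 / (2 * PI * w ^ 2)) with (a ^ 2 / (2 * PI) * / w * / w) by (field; lra).
  replace (a ^ 2 / (2 * PI * PI) * / w) with (a ^ 2 / (2 * PI) * / w * / PI) by (field; lra).
  assert (0 <= a ^ 2 / (2 * PI) * / w).
  { apply Rmult_le_pos; [apply Rmult_le_pos; [apply pow2_ge_0|]|];
      apply Rlt_le, Rinv_0_lt_compat; lra. }
  apply Rmult_le_compat_l; [assumption|]. apply Rinv_le_contravar; lra.
Qed.

(** * The periodized kernel *)

Section PeriodizedKernel.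

Variables (a x : R).
Hypothesis Ha : 0 < a.
Hypothesis Hx : 0 < x <= PI / 2.

(* Folding [z |-> Pa a (x - z)] over the periods [+-[2 PI k, 2 PI (k + 1)]] onto
   [s] in [[0, PI]] gives [bk k s] (see [Yk_eq] below). *)
Definition Q (k : nat) u := Pa a (2 * PI * INR k + u) + Pa a (2 * PI * (INR k + 1) - u).

Definition bk (k : nat) s := Q k (s - x) - Q k (s + x).

Definition W (N : nat) s := sum_f_R0 (fun k => bk k s) N.

(* [Ga a x s] expressed through [Pa] (see [GQ_eq_Ga]). *)
Definition GQ s := Q 0 (Rabs (s - x)) - Q 0 x.

Definition Codd (m : nat) t := Pa a (2 * PI * INR m + t) - Pa a (2 * PI * INR m - t).

Lemma Q_le k u v : 0 < 2 * PI * INR k + u -> u <= v -> u + v <= 2 * PI -> Q k u <= Q k v.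
Proof.
  intros H1 H2 H3. unfold Q.
  assert (H := Pa_increment_le a (2 * PI * INR k + u) (2 * PI * (INR k + 1) - v) (v - u) Ha).
  replace (2 * PI * (INR k + 1) - v + (v - u)) with (2 * PI * (INR k + 1) - u) in H by ring.
  replace (2 * PI * INR k + u + (v - u)) with (2 * PI * INR k + v) in H by ring.
  enough (Pa a (2 * PI * (INR k + 1) - u) - Pa a (2 * PI * (INR k + 1) - v) <=
          Pa a (2 * PI * INR k + v) - Pa a (2 * PI * INR k + u)) by lra.
  apply H; lra.
Qed.

Lemma bk_le0 k s : 0 <= s <= PI -> (x < s \/ (1 <= k)%nat) -> bk k s <= 0.
Proof.
  intros Hs Hk. unfold bk.
  assert (0 < PI) by apply PI_RGT_0. assert (0 <= INR k) by apply pos_INR.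
  enough (Q k (s - x) <= Q k (s + x)) by lra.
  apply Q_le; try lra.
  destruct Hk as [Hk|Hk]; [nra|]. apply le_INR in Hk. simpl in Hk. nra.
Qed.

Lemma W_le0 N s : x < s <= PI -> W N s <= 0.
Proof.
  intros Hs. induction N as [|N IH]; unfold W in *; cbn [sum_f_R0].
  - apply bk_le0; [lra|left; lra].
  - assert (bk (S N) s <= 0) by (apply bk_le0; [lra|left; lra]). lra.
Qed.

Lemma W_le_bk0 N s : 0 <= s <= PI -> W N s <= bk 0 s.
Proof.
  intros Hs. induction N as [|N IH]; unfold W in *; cbn [sum_f_R0]; [lra|].
  assert (bk (S N) s <= 0) by (apply bk_le0; [lra|right; lia]). lra.
Qed.

Lemma W_sub_Pa_le N s : 0 <= s <= 2 * x ->
  W N s - Pa a (x - s) <= - Pa a x - Pa a (PI / 2).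
Proof.
  intros Hs. assert (0 < PI) by apply PI_RGT_0.
  assert (Hb := W_le_bk0 N s ltac:(lra)).
  unfold bk, Q in Hb. simpl INR in Hb.
  replace (2 * PI * 0 + (s - x)) with (- (x - s)) in Hb by ring. rewrite Pa_opp in Hb.
  assert (Pa a x <= Pa a (2 * PI * 0 + (s + x))) by (apply Pa_le; lra).
  assert (Pa a (PI / 2) <= Pa a (2 * PI * (0 + 1) - (s + x))) by (apply Pa_le; lra).
  assert (Pa a (2 * PI * (0 + 1) - (s - x)) <= 0) by apply Pa_le0.
  lra.
Qed.

Lemma Q_opp_sub m t : Q m (- t) - Q m t = Codd (S m) t - Codd m t.
Proof.
  unfold Q, Codd. rewrite S_INR.
  replace (2 * PI * INR m + - t) with (2 * PI * INR m - t) by ring.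
  replace (2 * PI * (INR m + 1) - - t) with (2 * PI * (INR m + 1) + t) by ring.
  ring.
Qed.

Lemma bk_le_Codd_sub k s : 0 <= s < x -> (1 <= k)%nat ->
  bk k s <= Codd (S k) (x - s) - Codd k (x - s).
Proof.
  intros Hs Hk. assert (0 < PI) by apply PI_RGT_0.
  rewrite <- Q_opp_sub. unfold bk. replace (s - x) with (- (x - s)) by ring.
  enough (Q k (x - s) <= Q k (s + x)) by lra.
  apply le_INR in Hk. simpl in Hk. apply Q_le; nra.
Qed.

Lemma bk0_le_GQ_Codd s : 0 <= s < x -> bk 0 s <= GQ s + Codd 1 (x - s).
Proof.
  intros Hs. assert (0 < PI) by apply PI_RGT_0.
  assert (Codd 0 (x - s) = 0).
  { unfold Codd. simpl INR.
    replace (2 * PI * 0 - (x - s)) with (- (2 * PI * 0 + (x - s))) by ring.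
    rewrite Pa_opp. ring. }
  assert (Q 0 x <= Q 0 (s + x)) by (apply Q_le; simpl INR; lra).
  assert (Habs : Rabs (s - x) = x - s) by (rewrite Rabs_left; lra).
  generalize (Q_opp_sub 0 (x - s)). unfold bk, GQ. rewrite Habs.
  replace (s - x) with (- (x - s)) by ring. lra.
Qed.

(* Left of [x] the sum telescopes. *)
Lemma W_le_GQ_Codd N s : 0 <= s < x -> W N s <= GQ s + Codd (S N) (x - s).
Proof.
  intros Hs. induction N as [|N IH]; unfold W in *; cbn [sum_f_R0].
  - apply bk0_le_GQ_Codd, Hs.
  - generalize (bk_le_Codd_sub (S N) s Hs ltac:(lia)). lra.
Qed.

Lemma Codd_le N t : 0 <= t <= PI -> Codd (S N) t <= - Pa a (2 * PI * INR N + PI).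
Proof.
  intros Ht. assert (0 < PI) by apply PI_RGT_0. assert (0 <= INR N) by apply pos_INR.
  unfold Codd. rewrite S_INR.
  assert (Pa a (2 * PI * (INR N + 1) + t) <= 0) by apply Pa_le0.
  assert (Pa a (2 * PI * INR N + PI) <= Pa a (2 * PI * (INR N + 1) - t)) by (apply Pa_le; nra).
  lra.
Qed.

Lemma W_le_GQ N s : 0 <= s <= 2 * x -> s <> x ->
  W N s <= GQ s - Pa a (2 * PI * INR N + PI).
Proof.
  intros Hs Hsx. assert (0 < PI) by apply PI_RGT_0.
  assert (Pa a (2 * PI * INR N + PI) <= 0) by apply Pa_le0.
  destruct (Rlt_le_dec s x) as [Hlt|Hge].
  - generalize (W_le_GQ_Codd N s ltac:(lra)) (Codd_le N (x - s) ltac:(lra)). lra.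
  - enough (W N s <= GQ s) by lra.
    eapply Rle_trans; [apply W_le_bk0; lra|].
    unfold bk, GQ. rewrite Rabs_right by lra.
    assert (Q 0 x <= Q 0 (s + x)) by (apply Q_le; simpl INR; lra). lra.
Qed.

Lemma abs_GQ_le s : 0 <= s <= 2 * x -> s <> x ->
  Rabs (GQ s) <= (- Pa a x - 2 * Pa a (2 * PI - x)) + 2 / PI * (sqrt a / sqrt (Rabs (s - x))).
Proof.
  intros Hs Hsx. assert (0 < PI) by apply PI_RGT_0.
  assert (Ht : 0 < Rabs (s - x) <= x).
  { split; [apply Rabs_pos_lt; lra|apply Rabs_le; lra]. }
  unfold GQ, Q. simpl INR. set (t := Rabs (s - x)) in *.
  replace (2 * PI * 0 + t) with t by ring.
  replace (2 * PI * (0 + 1) - t) with (2 * PI - t) by ring.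
  replace (2 * PI * 0 + x) with x by ring.
  replace (2 * PI * (0 + 1) - x) with (2 * PI - x) by ring.
  generalize (Pa_le0 a t) (Pa_le0 a (2 * PI - t)) (Pa_le0 a x) (Pa_le0 a (2 * PI - x)).
  assert (Pa a (2 * PI - x) <= Pa a (2 * PI - t)) by (apply Pa_le; lra).
  assert (- Pa a t <= 2 / PI * (sqrt a / sqrt t)) by (apply Pa_opp_le_inv_sqrt; lra).
  intros. apply Rabs_le. lra.
Qed.

Lemma continuous_GQ s : s <> x -> Rabs (s - x) < 2 * PI -> continuous GQ s.
Proof.
  intros Hs Hb. assert (Hne : 0 < Rabs (s - x)) by (apply Rabs_pos_lt; lra).
  unfold GQ, Q. apply continuous_of_ex_derive.
  assert (0 < PI) by apply PI_RGT_0.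
  auto_derive. change (s + - x) with (s - x).
  repeat split; try apply ex_derive_Pa; auto; intro; lra.
Qed.

Lemma GQ_eq_Ga y : y <> x -> GQ y = Ga a x y.
Proof.
  intros Hy. assert (0 < PI) by apply PI_RGT_0.
  assert (Hpos : forall w, 0 < 1 + a ^ 2 / w ^ 2)
    by (intros w; generalize (sqr_div_sqr_ge0 a w); lra).
  assert (Hln : forall w, ln (1 + a ^ 2 / w ^ 2) = - (2 * PI) * Pa a w)
    by (intros w; unfold Pa; field; lra).
  unfold GQ, Q, Ga. simpl INR. rewrite ln_div_mul_div, !Hln by apply Hpos.
  replace (2 * PI * 0 + x) with x by ring.
  replace (2 * PI * (0 + 1) - x) with (2 * PI - x) by ring.
  unfold sgn. destruct (Rlt_dec 0 (y - x)) as [H1|H1]; [|destruct (Rlt_dec (y - x) 0) as [H2|H2]].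
  - rewrite Rabs_right by lra.
    replace (2 * PI * 0 + (y - x)) with (- (x - y)) by ring. rewrite Pa_opp.
    replace (2 * PI * (0 + 1) - (y - x)) with (x - y + 2 * PI * 1) by ring.
    field. lra.
  - rewrite Rabs_left by lra.
    replace (2 * PI * 0 + - (y - x)) with (x - y) by ring.
    replace (2 * PI * (0 + 1) - - (y - x)) with (- (x - y + 2 * PI * -1)) by ring. rewrite Pa_opp.
    field. lra.
  - lra.
Qed.

End PeriodizedKernel.

Section HilbertBound.

Variables (a : R) (f : R -> R) (x M0 M1 : R).
Hypothesis Ha : 0 < a.
Hypothesis Hx : 0 < x <= PI / 2.
Hypothesis f_periodic : forall y, f (y + 2 * PI) = f y.
Hypothesis f_derivable : forall y, ex_derive f y.
Hypothesis Df_derivable : forall y, ex_derive (Derive f) y.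
Hypothesis f_bound : forall y, Rabs (f y) <= M0.
Hypothesis Df_bound : forall y, Rabs (Derive f y) <= M1.
Hypothesis f_even : forall y, f (- y) = f y.
Hypothesis f0 : f 0 = 0.
Hypothesis Df_nonneg : forall y, 0 <= y < PI -> 0 <= Derive f y.

Lemma continuous_f y : continuous f y.
Proof. apply continuous_of_ex_derive, f_derivable. Qed.

Lemma continuous_Df y : continuous (Derive f) y.
Proof. apply continuous_of_ex_derive, Df_derivable. Qed.

Lemma Df_opp y : Derive f (- y) = - Derive f y.
Proof.
  assert (H : is_derive (fun t => f (- t)) y (-1 * Derive f (- y))).
  { apply (is_derive_comp f (fun t => - t)); [apply Derive_correct, f_derivable|].
    auto_derive; auto. }
  assert (E : Derive (fun t => f (- t)) y = Derive f y) by (apply Derive_ext, f_even).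
  assert (E' : Derive (fun t => f (- t)) y = -1 * Derive f (- y)) by (apply is_derive_unique, H).
  lra.
Qed.

Lemma Df_periodic y : Derive f (y + 2 * PI) = Derive f y.
Proof.
  assert (H : is_derive (fun t => f (t + 2 * PI)) y (1 * Derive f (y + 2 * PI))).
  { apply (is_derive_comp f (fun t => t + 2 * PI)); [apply Derive_correct, f_derivable|].
    auto_derive; auto. }
  assert (E : Derive (fun t => f (t + 2 * PI)) y = Derive f y) by (apply Derive_ext, f_periodic).
  assert (E' : Derive (fun t => f (t + 2 * PI)) y = 1 * Derive f (y + 2 * PI))
    by (apply is_derive_unique, H).
  lra.
Qed.

Lemma f_2PI_INR n : f (2 * PI * INR n) = 0.
Proof.
  rewrite <- f0, <- (periodic_INR f _ f_periodic n 0). f_equal. ring.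
Qed.

Lemma Df_nonneg_le s : 0 <= s < PI -> 0 <= Derive f s <= M1.
Proof.
  intros Hs. split; [apply Df_nonneg, Hs|].
  eapply Rle_trans; [apply Rle_abs|apply Df_bound].
Qed.

Lemma M1_ge0 : 0 <= M1.
Proof. generalize (Df_bound 0) (Rabs_pos (Derive f 0)). lra. Qed.

Lemma f_sub_le_f_add eps : 0 < eps < x -> f (x - eps) <= f (x + eps).
Proof.
  intros He. assert (0 < PI) by apply PI_RGT_0.
  destruct (MVT_gen f (x - eps) (x + eps) (Derive f)) as [c [Hc Heq]].
  - intros y _. apply Derive_correct, f_derivable.
  - intros y _. apply continuity_pt_filterlim, continuous_f.
  - rewrite Rmin_left, Rmax_right in Hc by lra.
    assert (0 <= Derive f c) by (apply Df_nonneg; lra).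
    nra.
Qed.

(** * Integration by parts *)

Definition fKa y := f (x - y) * Ka a y.

Lemma continuous_fKa y : y <> 0 -> continuous fKa y.
Proof.
  intros Hy. assert (0 < PI) by apply PI_RGT_0.
  apply continuous_of_ex_derive. unfold fKa, Ka. auto_derive.
  split; [apply f_derivable|]. split; [|auto].
  assert (0 < y * y) by nra. assert (0 < a * a) by nra.
  intro Hz. apply Rmult_integral in Hz as [Hz|Hz]; [apply Rmult_integral in Hz as [Hz|Hz]|]; nra.
Qed.

Lemma is_derive_f_sub_Pa y : y <> 0 ->
  is_derive (fun y => f (x - y) * Pa a y) y (-1 * Derive f (x - y) * Pa a y + fKa y).
Proof.
  intros Hy.
  assert (H1 : is_derive (fun y => f (x - y)) y (-1 * Derive f (x - y))).
  { apply (is_derive_comp f (fun y => x - y)); [apply Derive_correct, f_derivable|].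
    auto_derive; auto. }
  exact (is_derive_mult _ _ y _ _ H1 (is_derive_Pa a y Ha Hy) Rmult_comm).
Qed.

Lemma RInt_fKa_by_parts u v : (forall y, Rmin u v <= y <= Rmax u v -> y <> 0) ->
  RInt fKa u v =
  f (x - v) * Pa a v - f (x - u) * Pa a u + RInt (fun y => Derive f (x - y) * Pa a y) u v.
Proof.
  intros H0.
  set (dPhi := fun y => -1 * Derive f (x - y) * Pa a y + fKa y).
  assert (Hcont : forall y, y <> 0 -> continuous (fun y => Derive f (x - y) * Pa a y) y).
  { intros y Hy. apply continuous_mult_R; [apply continuous_sub_arg, continuous_Df|].
    apply continuous_of_ex_derive, ex_derive_Pa; auto. }
  assert (HI : is_RInt dPhi u v (f (x - v) * Pa a v - f (x - u) * Pa a u)).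
  { apply (is_RInt_derive (V := R_CompleteNormedModule) (fun y => f (x - y) * Pa a y) dPhi u v);
      intros y Hy; [apply is_derive_f_sub_Pa; auto|].
    apply continuous_plus_R; [|apply continuous_fKa; auto].
    apply (continuous_mult_R (fun y => -1 * Derive f (x - y)) (Pa a)).
    - apply continuous_mult_R; [apply continuous_const|apply continuous_sub_arg, continuous_Df].
    - apply continuous_of_ex_derive, ex_derive_Pa; auto. }
  assert (Ex : ex_RInt (fun y => Derive f (x - y) * Pa a y) u v)
    by (apply ex_RInt_continuous_R; intros y Hy; apply Hcont; auto).
  rewrite (RInt_ext fKa (fun y => dPhi y + Derive f (x - y) * Pa a y))
    by (intros y _; unfold dPhi; lra).
  rewrite RInt_plus_R, (is_RInt_unique _ _ _ _ HI); [reflexivity| |exact Ex].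
  eexists; exact HI.
Qed.

Definition Lam z := Derive f z * Pa a (x - z).

Lemma continuous_Lam z : z <> x -> continuous Lam z.
Proof.
  intros Hz. apply continuous_of_ex_derive. unfold Lam. auto_derive.
  split; [apply Df_derivable|]. split; [|auto]. apply ex_derive_Pa; auto. intro; lra.
Qed.

Lemma ex_RInt_Lam u v : x < Rmin u v \/ Rmax u v < x -> ex_RInt Lam u v.
Proof.
  intros H. apply ex_RInt_continuous_R. intros y Hy. apply continuous_Lam. intros ->. lra.
Qed.

Lemma RInt_fKa_right N eps : 0 < eps < x ->
  RInt fKa eps (2 * PI * (INR N + 1) + x) =
  - f (x - eps) * Pa a eps + RInt Lam (- (2 * PI * (INR N + 1))) (x - eps).
Proof.
  intros He. assert (0 < PI) by apply PI_RGT_0. assert (0 <= INR N) by apply pos_INR.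
  rewrite RInt_fKa_by_parts by (intros y Hy; rewrite Rmin_left, Rmax_right in Hy by nra; lra).
  replace (x - (2 * PI * (INR N + 1) + x)) with (- (2 * PI * INR (S N))) by (rewrite S_INR; ring).
  rewrite f_even, f_2PI_INR.
  rewrite (RInt_ext _ (fun y => Lam (x - y))) by (intros y _; unfold Lam; do 3 f_equal; ring).
  rewrite RInt_comp_sub_R.
  - replace (x - (2 * PI * (INR N + 1) + x)) with (- (2 * PI * (INR N + 1))) by ring. lra.
  - apply ex_RInt_Lam. rewrite Rmin_right, Rmax_left by nra. right. nra.
Qed.

Lemma RInt_fKa_left N eps : 0 < eps < x ->
  RInt fKa (x - 2 * PI * (INR N + 1)) (- eps) =
  f (x + eps) * Pa a eps + RInt Lam (x + eps) (2 * PI * (INR N + 1)).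
Proof.
  intros He. assert (0 < PI) by apply PI_RGT_0. assert (0 <= INR N) by apply pos_INR.
  rewrite RInt_fKa_by_parts by (intros y Hy; rewrite Rmin_left, Rmax_right in Hy by nra; lra).
  replace (x - (x - 2 * PI * (INR N + 1))) with (2 * PI * INR (S N)) by (rewrite S_INR; ring).
  rewrite f_2PI_INR, Pa_opp. replace (x - - eps) with (x + eps) by ring.
  rewrite (RInt_ext _ (fun y => Lam (x - y))) by (intros y _; unfold Lam; do 3 f_equal; ring).
  rewrite RInt_comp_sub_R.
  - replace (x - - eps) with (x + eps) by ring.
    replace (x - (x - 2 * PI * (INR N + 1))) with (2 * PI * (INR N + 1)) by ring. lra.
  - apply ex_RInt_Lam. rewrite Rmin_right, Rmax_left by nra. left. nra.
Qed.

(** * Folding the periods onto [[0, PI]] *)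

Definition Yk (k : nat) s := Lam (2 * PI * INR k + s) + Lam (- (2 * PI * INR k) - s)
  + Lam (2 * PI * (INR k + 1) - s) + Lam (- (2 * PI * (INR k + 1)) + s).

(* [Lam s] is the only term of [Yk 0 s] that is singular on [[0, PI]] (at [s = x]). *)
Definition Z (N : nat) s := sum_f_R0 (fun k => Yk k s) N - Lam s.

Lemma Yk_eq k s : Yk k s = Derive f s * bk a x k s.
Proof.
  assert (Hper := periodic_INR (Derive f) _ Df_periodic).
  unfold Yk, bk, Q, Lam.
  rewrite (Rplus_comm (2 * PI * INR k) s), Hper.
  replace (- (2 * PI * INR k) - s) with (- (s + 2 * PI * INR k)) by ring.
  rewrite Df_opp, Hper.
  replace (2 * PI * (INR k + 1) - s) with (- s + 2 * PI * INR (S k)) by (rewrite S_INR; ring).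
  rewrite Hper, Df_opp.
  replace (- (2 * PI * (INR k + 1)) + s) with (s + - (2 * PI * INR (S k))) by (rewrite S_INR; ring).
  rewrite <- (Hper (S k) (s + - (2 * PI * INR (S k)))).
  replace (s + - (2 * PI * INR (S k)) + 2 * PI * INR (S k)) with s by ring.
  rewrite <- (Pa_opp a (x - (s + 2 * PI * INR k))), <- (Pa_opp a (x - (- s + 2 * PI * INR (S k)))).
  rewrite S_INR.
  replace (- (x - (s + 2 * PI * INR k))) with (2 * PI * INR k + (s - x)) by ring.
  replace (x - - (s + 2 * PI * INR k)) with (2 * PI * INR k + (s + x)) by ring.
  replace (- (x - (- s + 2 * PI * (INR k + 1)))) with (2 * PI * (INR k + 1) - (s + x)) by ring.
  replace (x - (s + - (2 * PI * (INR k + 1)))) with (2 * PI * (INR k + 1) - (s - x)) by ring.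
  ring.
Qed.

Lemma Lam_add_Z N s : Lam s + Z N s = Derive f s * W a x N s.
Proof.
  unfold Z, W. induction N as [|N IH]; cbn [sum_f_R0].
  - rewrite Yk_eq. ring.
  - rewrite Yk_eq. lra.
Qed.

Lemma RInt_Lam_add c : x < c \/ c + PI < x ->
  ex_RInt (fun s => Lam (c + s)) 0 PI /\ RInt (fun s => Lam (c + s)) 0 PI = RInt Lam c (c + PI).
Proof.
  intros H. assert (0 < PI) by apply PI_RGT_0.
  split.
  - apply ex_RInt_continuous_R. intros y Hy. rewrite Rmin_left, Rmax_right in Hy by lra.
    apply (continuous_comp_R (fun s => c + s) Lam).
    + apply continuous_of_ex_derive. auto_derive. auto.
    + apply continuous_Lam. lra.
  - rewrite RInt_comp_add_R; [f_equal; ring|].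
    apply ex_RInt_Lam. rewrite Rmin_left, Rmax_right by lra. lra.
Qed.

Lemma RInt_Lam_sub c : x < c - PI \/ c < x ->
  ex_RInt (fun s => Lam (c - s)) 0 PI /\ RInt (fun s => Lam (c - s)) 0 PI = RInt Lam (c - PI) c.
Proof.
  intros H. assert (0 < PI) by apply PI_RGT_0.
  split.
  - apply ex_RInt_continuous_R. intros y Hy. rewrite Rmin_left, Rmax_right in Hy by lra.
    apply continuous_sub_arg, continuous_Lam. lra.
  - rewrite RInt_comp_sub_R; [f_equal; ring|].
    apply ex_RInt_Lam. rewrite Rmin_right, Rmax_left by lra. lra.
Qed.

Lemma RInt_Yk k : (1 <= k)%nat ->
  ex_RInt (Yk k) 0 PI /\
  RInt (Yk k) 0 PI = RInt Lam (2 * PI * INR k) (2 * PI * (INR k + 1))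
                     + RInt Lam (- (2 * PI * (INR k + 1))) (- (2 * PI * INR k)).
Proof.
  intros Hk. assert (0 < PI) by apply PI_RGT_0.
  assert (Hk1 : 1 <= INR k) by (apply le_INR in Hk; simpl in Hk; lra).
  destruct (RInt_Lam_add (2 * PI * INR k)) as [E1 R1]; [left; nra|].
  destruct (RInt_Lam_sub (- (2 * PI * INR k))) as [E2 R2]; [right; nra|].
  destruct (RInt_Lam_sub (2 * PI * (INR k + 1))) as [E3 R3]; [left; nra|].
  destruct (RInt_Lam_add (- (2 * PI * (INR k + 1)))) as [E4 R4]; [right; nra|].
  unfold Yk. split; [repeat (assumption || apply ex_RInt_plus_R)|].
  rewrite !RInt_plus_R by (repeat (assumption || apply ex_RInt_plus_R)).
  rewrite R1, R2, R3, R4.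
  rewrite <- (RInt_Chasles_R Lam (2 * PI * INR k) (2 * PI * INR k + PI) (2 * PI * (INR k + 1)))
    by (apply ex_RInt_Lam; rewrite Rmin_left, Rmax_right by nra; left; nra).
  rewrite <- (RInt_Chasles_R Lam (- (2 * PI * (INR k + 1))) (- (2 * PI * INR k) - PI)
                (- (2 * PI * INR k)))
    by (apply ex_RInt_Lam; rewrite Rmin_left, Rmax_right by nra; right; nra).
  replace (2 * PI * (INR k + 1) - PI) with (2 * PI * INR k + PI) by ring.
  replace (- (2 * PI * (INR k + 1)) + PI) with (- (2 * PI * INR k) - PI) by ring.
  lra.
Qed.

Lemma Z_O s : Z 0 s = Lam (0 - s) + Lam (2 * PI - s) + Lam (- (2 * PI) + s).
Proof.
  unfold Z, Yk. simpl sum_f_R0. simpl INR.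
  replace (2 * PI * 0 + s) with s by ring.
  replace (- (2 * PI * 0) - s) with (0 - s) by ring.
  replace (2 * PI * (0 + 1) - s) with (2 * PI - s) by ring.
  replace (- (2 * PI * (0 + 1)) + s) with (- (2 * PI) + s) by ring.
  ring.
Qed.

Lemma RInt_Z N : ex_RInt (Z N) 0 PI /\
  RInt (Z N) 0 PI = RInt Lam (- (2 * PI * (INR N + 1))) 0 + RInt Lam PI (2 * PI * (INR N + 1)).
Proof.
  assert (0 < PI) by apply PI_RGT_0.
  induction N as [|N [IHe IHr]].
  - destruct (RInt_Lam_sub 0) as [E2 R2]; [right; lra|].
    destruct (RInt_Lam_sub (2 * PI)) as [E3 R3]; [left; lra|].
    destruct (RInt_Lam_add (- (2 * PI))) as [E4 R4]; [right; lra|].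
    rewrite (RInt_ext _ _ _ _ (fun s _ => Z_O s)).
    split; [apply (ex_RInt_ext _ _ _ _ (fun s _ => eq_sym (Z_O s)));
            repeat (assumption || apply ex_RInt_plus_R)|].
    rewrite !RInt_plus_R by (repeat (assumption || apply ex_RInt_plus_R)).
    rewrite R2, R3, R4. simpl INR.
    replace (- (2 * PI) + PI) with (0 - PI) by ring.
    replace (2 * PI * (0 + 1)) with (2 * PI) by ring.
    replace (2 * PI - PI) with PI by ring.
    rewrite <- (RInt_Chasles_R Lam (- (2 * PI)) (0 - PI) 0)
      by (apply ex_RInt_Lam; rewrite Rmin_left, Rmax_right by lra; right; lra).
    lra.
  - destruct (RInt_Yk (S N)) as [Ey Ry]; [lia|].
    assert (0 <= INR N) by apply pos_INR.
    assert (Hz : forall s, Z (S N) s = Z N s + Yk (S N) s) by (intros; unfold Z; simpl; ring).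
    rewrite (RInt_ext _ _ _ _ (fun s _ => Hz s)).
    split; [apply (ex_RInt_ext _ _ _ _ (fun s _ => eq_sym (Hz s))), ex_RInt_plus_R; auto|].
    rewrite RInt_plus_R, IHr, Ry, S_INR by auto.
    rewrite <- (RInt_Chasles_R Lam (- (2 * PI * (INR N + 1 + 1))) (- (2 * PI * (INR N + 1))) 0)
      by (apply ex_RInt_Lam; rewrite Rmin_left, Rmax_right by nra; right; nra).
    rewrite <- (RInt_Chasles_R Lam PI (2 * PI * (INR N + 1)) (2 * PI * (INR N + 1 + 1)))
      by (apply ex_RInt_Lam; rewrite Rmin_left, Rmax_right by nra; left; nra).
    lra.
Qed.

Lemma ex_RInt_Z N u v : 0 <= u -> u <= v -> v <= PI -> ex_RInt (Z N) u v.
Proof.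
  intros H1 H2 H3.
  apply (ex_RInt_Chasles_2 (V := R_CompleteNormedModule) _ 0); [lra|].
  apply (ex_RInt_Chasles_1 (V := R_CompleteNormedModule) _ _ _ PI); [lra|apply RInt_Z].
Qed.

Lemma RInt_Lam_add_Z N u v : 0 <= u -> u <= v -> v <= PI -> v < x \/ x < u ->
  ex_RInt (fun s => Derive f s * W a x N s) u v /\
  RInt Lam u v + RInt (Z N) u v = RInt (fun s => Derive f s * W a x N s) u v.
Proof.
  intros H1 H2 H3 H4.
  assert (EL : ex_RInt Lam u v) by (apply ex_RInt_Lam; rewrite Rmin_left, Rmax_right by lra; lra).
  assert (EZ : ex_RInt (Z N) u v) by (apply ex_RInt_Z; lra).
  rewrite <- RInt_plus_R by assumption.
  split; [apply (ex_RInt_ext (fun s => Lam s + Z N s)); [intros; apply Lam_add_Z|];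
          apply ex_RInt_plus_R; auto|].
  apply RInt_ext. intros; apply Lam_add_Z.
Qed.

Lemma RInt_Lam_window N eps : 0 < eps < x ->
  RInt Lam (- (2 * PI * (INR N + 1))) (x - eps) + RInt Lam (x + eps) (2 * PI * (INR N + 1)) =
  (RInt Lam 0 (x - eps) + RInt (Z N) 0 (x - eps)) + RInt (Z N) (x - eps) (x + eps)
  + (RInt Lam (x + eps) (2 * x) + RInt (Z N) (x + eps) (2 * x))
  + (RInt Lam (2 * x) PI + RInt (Z N) (2 * x) PI).
Proof.
  intros He. assert (0 < PI) by apply PI_RGT_0.
  destruct (RInt_Z N) as [_ RZ].
  set (M := 2 * PI * (INR N + 1)) in *.
  assert (HM : 2 * PI <= M) by (unfold M; generalize (pos_INR N); nra).
  assert (ExL : forall u v, u <= v -> v < x \/ x < u -> ex_RInt Lam u v)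
    by (intros u v Huv Hx'; apply ex_RInt_Lam; rewrite Rmin_left, Rmax_right by lra; lra).
  assert (ExZ : forall u v, 0 <= u -> u <= v -> v <= PI -> ex_RInt (Z N) u v) by apply ex_RInt_Z.
  rewrite <- (RInt_Chasles_R Lam (- M) 0 (x - eps)) by (apply ExL; lra).
  rewrite <- (RInt_Chasles_R Lam (x + eps) PI M) by (apply ExL; lra).
  rewrite <- (RInt_Chasles_R Lam (x + eps) (2 * x) PI) by (apply ExL; lra).
  rewrite <- (RInt_Chasles_R (Z N) 0 (x - eps) PI) in RZ by (apply ExZ; lra).
  rewrite <- (RInt_Chasles_R (Z N) (x - eps) (x + eps) PI) in RZ by (apply ExZ; lra).
  rewrite <- (RInt_Chasles_R (Z N) (x + eps) (2 * x) PI) in RZ by (apply ExZ; lra).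
  lra.
Qed.

Definition Gf s := Derive f s * GQ a x s.

Lemma ex_RInt_Gf u v : 0 <= u -> u <= v -> v <= 2 * x -> v < x \/ x < u -> ex_RInt Gf u v.
Proof.
  intros H1 H2 H3 H4. assert (0 < PI) by apply PI_RGT_0.
  apply ex_RInt_continuous_R. rewrite Rmin_left, Rmax_right by lra. intros y Hy.
  apply continuous_mult_R; [apply continuous_Df|].
  apply (continuous_GQ a x Ha); [intro; lra|apply Rabs_def1; lra].
Qed.

Lemma RInt_Lam_add_Z_le_Gf N u v : 0 <= u -> u <= v -> v <= 2 * x -> v < x \/ x < u ->
  RInt Lam u v + RInt (Z N) u v <= RInt Gf u v + - Pa a (2 * PI * INR N + PI) * M1 * (v - u).
Proof.
  intros H1 H2 H3 H4. assert (0 < PI) by apply PI_RGT_0.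
  set (e := - Pa a (2 * PI * INR N + PI)).
  assert (He : 0 <= e) by (unfold e; generalize (Pa_le0 a (2 * PI * INR N + PI)); lra).
  destruct (RInt_Lam_add_Z N u v) as [EW ->]; try lra.
  assert (EG := ex_RInt_Gf u v H1 H2 H3 H4).
  replace (RInt Gf u v + e * M1 * (v - u)) with (RInt (fun s => Gf s + e * M1) u v).
  2: { rewrite RInt_plus_R, RInt_const_R; [lra|exact EG|].
       apply ex_RInt_continuous_R. intros; apply continuous_const. }
  apply RInt_le; auto.
  - apply ex_RInt_plus_R; auto. apply ex_RInt_continuous_R. intros; apply continuous_const.
  - intros s Hs. unfold Gf.
    assert (Hfs := Df_nonneg_le s ltac:(lra)).
    assert (HW := W_le_GQ a x Ha Hx N s ltac:(lra) ltac:(lra)).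
    assert (Ee : e = - Pa a (2 * PI * INR N + PI)) by reflexivity.
    assert (0 <= Derive f s * (GQ a x s + e - W a x N s)) by (apply Rmult_le_pos; lra).
    assert (0 <= (M1 - Derive f s) * e) by (apply Rmult_le_pos; lra).
    nra.
Qed.

Lemma RInt_Lam_add_Z_le0 N : RInt Lam (2 * x) PI + RInt (Z N) (2 * x) PI <= 0.
Proof.
  assert (0 < PI) by apply PI_RGT_0.
  destruct (RInt_Lam_add_Z N (2 * x) PI) as [EW ->]; try lra.
  replace 0 with ((PI - 2 * x) * 0) by ring.
  apply RInt_le_const_R; [lra|exact EW|]. intros s Hs.
  assert (Hfs := Df_nonneg_le s ltac:(lra)).
  assert (HW := W_le0 a x Ha Hx N s ltac:(lra)). nra.
Qed.

Lemma RInt_Z_le N eps : 0 < eps < x ->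
  RInt (Z N) (x - eps) (x + eps) <= 2 * eps * M1 * (- Pa a x - Pa a (PI / 2)).
Proof.
  intros He. assert (0 < PI) by apply PI_RGT_0.
  replace (2 * eps * M1 * (- Pa a x - Pa a (PI / 2)))
    with ((x + eps - (x - eps)) * (M1 * (- Pa a x - Pa a (PI / 2)))) by ring.
  apply RInt_le_const_R; [lra|apply ex_RInt_Z; lra|]. intros s Hs.
  assert (Hfs := Df_nonneg_le s ltac:(lra)).
  assert (HW := W_sub_Pa_le a x Ha Hx N s ltac:(lra)).
  assert (Z N s = Derive f s * (W a x N s - Pa a (x - s)))
    by (generalize (Lam_add_Z N s); unfold Lam; lra).
  assert (0 <= - Pa a x - Pa a (PI / 2)) by (generalize (Pa_le0 a x) (Pa_le0 a (PI / 2)); lra).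
  nra.
Qed.

Lemma RInt_fKa_truncated_le N eps : 0 < eps < x ->
  RInt fKa eps (2 * PI * (INR N + 1) + x) + RInt fKa (x - 2 * PI * (INR N + 1)) (- eps) <=
  RInt Gf 0 (x - eps) + RInt Gf (x + eps) (2 * x)
  + 2 * x * M1 * (- Pa a (2 * PI * INR N + PI)) + 2 * eps * M1 * (- Pa a x - Pa a (PI / 2)).
Proof.
  intros He. assert (0 < PI) by apply PI_RGT_0.
  rewrite RInt_fKa_right, RInt_fKa_left by exact He.
  assert (Pa a eps * (f (x + eps) - f (x - eps)) <= 0)
    by (generalize (Pa_le0 a eps) (f_sub_le_f_add eps He); nra).
  assert (Window := RInt_Lam_window N eps He).
  assert (I1 := RInt_Lam_add_Z_le_Gf N 0 (x - eps)
                  ltac:(lra) ltac:(lra) ltac:(lra) ltac:(lra)).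
  assert (I2 := RInt_Lam_add_Z_le_Gf N (x + eps) (2 * x)
                  ltac:(lra) ltac:(lra) ltac:(lra) ltac:(lra)).
  assert (I3 := RInt_Lam_add_Z_le0 N).
  assert (I4 := RInt_Z_le N eps He).
  assert (0 <= - Pa a (2 * PI * INR N + PI) * M1 * eps).
  { apply Rmult_le_pos; [apply Rmult_le_pos|]; [|apply M1_ge0|lra].
    generalize (Pa_le0 a (2 * PI * INR N + PI)). lra. }
  lra.
Qed.

(** * Passing to the limit *)

Lemma abs_fKa_le eps y : 0 < eps <= Rabs y -> Rabs (fKa y) <= M0 * a ^ 2 / (PI * eps) / y ^ 2.
Proof.
  intros Hy. unfold fKa. rewrite Rabs_mult.
  assert (HK : Rabs (Ka a y) <= a ^ 2 / (PI * eps) / y ^ 2).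
  { destruct (Rle_or_lt 0 y) as [Hy0|Hy0].
    - rewrite Rabs_right in Hy by lra.
      rewrite Rabs_right by (apply Rle_ge, Ka_bounds; lra).
      apply Ka_le_inv_sqr; lra.
    - rewrite Rabs_left in Hy by lra.
      rewrite <- (Ropp_involutive y) at 1. rewrite Ka_opp, Rabs_Ropp.
      rewrite Rabs_right by (apply Rle_ge, Ka_bounds; lra).
      replace (y ^ 2) with ((- y) ^ 2) by ring. apply Ka_le_inv_sqr; lra. }
  replace (M0 * a ^ 2 / (PI * eps) / y ^ 2) with (M0 * (a ^ 2 / (PI * eps) / y ^ 2))
    by (unfold Rdiv; ring).
  apply Rmult_le_compat; auto using Rabs_pos.
Qed.

Lemma ex_lim_RInt_fKa_pinfty eps : 0 < eps ->
  exists I, filterlim (fun B => RInt fKa eps B) (Rbar_locally p_infty) (locally I).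
Proof.
  intros He. set (C := M0 * a ^ 2 / (PI * eps)).
  apply (ex_lim_RInt_dominated fKa (fun y => C / y ^ 2) (fun y => - C / y) (fun y => eps <= y))
    with (c := eps) (l := 0).
  - intros; lra.
  - intros y Hy. apply continuous_fKa. lra.
  - intros y Hy. apply abs_fKa_le. rewrite Rabs_right; lra.
  - intros y Hy. auto_derive; [intro; lra|field; intro; lra].
  - intros y Hy. apply continuous_of_ex_derive. auto_derive. intro Hz. nra.
  - apply Rbar_locally_filter.
  - simpl; lra.
  - exists eps. intros; simpl; lra.
  - apply (is_lim_inv_infty C p_infty). auto.
Qed.

Lemma ex_lim_RInt_fKa_minfty eps : 0 < eps ->
  exists I, filterlim (fun A => RInt fKa A (- eps)) (Rbar_locally m_infty) (locally I).
Proof.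
  intros He. set (C := M0 * a ^ 2 / (PI * eps)).
  apply (ex_lim_RInt_dominated_swap fKa (fun y => C / y ^ 2) (fun y => - C / y)
           (fun y => y <= - eps))
    with (c := - eps) (l := 0).
  - intros; lra.
  - intros y Hy. apply continuous_fKa. lra.
  - intros y Hy. apply abs_fKa_le. rewrite Rabs_left; lra.
  - intros y Hy. auto_derive; [intro; lra|field; intro; lra].
  - intros y Hy. apply continuous_of_ex_derive. auto_derive. intro Hz. nra.
  - apply Rbar_locally_filter.
  - simpl; lra.
  - exists (- eps). intros; simpl; lra.
  - apply (is_lim_inv_infty C m_infty). auto.
Qed.

(* Meaningful only where the limit exists, see [Ipos_lim] and [Ineg_lim]. *)
Definition Ipos eps := real (Lim (fun B => RInt fKa eps B) p_infty).
Definition Ineg eps := real (Lim (fun A => RInt fKa A (- eps)) m_infty).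

Lemma Ipos_lim eps : 0 < eps ->
  filterlim (fun B => RInt fKa eps B) (Rbar_locally p_infty) (locally (Ipos eps)).
Proof.
  intros He. destruct (ex_lim_RInt_fKa_pinfty eps He) as [I HI].
  unfold Ipos. replace (Lim _ p_infty) with (Finite I); [exact HI|].
  symmetry. apply is_lim_unique, HI.
Qed.

Lemma Ineg_lim eps : 0 < eps ->
  filterlim (fun A => RInt fKa A (- eps)) (Rbar_locally m_infty) (locally (Ineg eps)).
Proof.
  intros He. destruct (ex_lim_RInt_fKa_minfty eps He) as [I HI].
  unfold Ineg. replace (Lim _ m_infty) with (Finite I); [exact HI|].
  symmetry. apply is_lim_unique, HI.
Qed.

Lemma ex_RInt_fKa_pos u v : 0 < u -> 0 < v -> ex_RInt fKa u v.
Proof.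
  intros Hu Hv. apply ex_RInt_continuous_R. intros y Hy. apply continuous_fKa.
  assert (0 < Rmin u v) by (apply Rmin_glb_lt; auto). lra.
Qed.

Lemma ex_RInt_fKa_neg u v : u < 0 -> v < 0 -> ex_RInt fKa u v.
Proof.
  intros Hu Hv. apply ex_RInt_continuous_R. intros y Hy. apply continuous_fKa.
  assert (Rmax u v < 0) by (apply Rmax_lub_lt; auto). lra.
Qed.

Lemma Ipos_Chasles eps eps' : 0 < eps -> 0 < eps' -> Ipos eps = RInt fKa eps eps' + Ipos eps'.
Proof.
  intros He He'.
  apply (filterlim_locally_unique (K := R_AbsRing) (V := R_NormedModule)
           (FF := Proper_StrongProper _ (Rbar_locally_filter p_infty)) (fun B => RInt fKa eps B));
    [apply Ipos_lim; auto|].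
  apply (filterlim_ext_loc (fun B => RInt fKa eps eps' + RInt fKa eps' B)).
  - exists (Rmax eps eps'). intros B HB.
    generalize (Rmax_l eps eps') (Rmax_r eps eps'). intros.
    apply RInt_Chasles_R; apply ex_RInt_fKa_pos; lra.
  - apply filterlim_plus_R; [apply filterlim_const|apply Ipos_lim; auto].
Qed.

Lemma Ineg_Chasles eps eps' : 0 < eps -> 0 < eps' ->
  Ineg eps = Ineg eps' + RInt fKa (- eps') (- eps).
Proof.
  intros He He'.
  apply (filterlim_locally_unique (K := R_AbsRing) (V := R_NormedModule)
           (FF := Proper_StrongProper _ (Rbar_locally_filter m_infty))
           (fun A => RInt fKa A (- eps)));
    [apply Ineg_lim; auto|].
  apply (filterlim_ext_loc (fun A => RInt fKa A (- eps') + RInt fKa (- eps') (- eps))).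
  - exists (Rmin (- eps) (- eps')). intros A HA.
    generalize (Rmin_l (- eps) (- eps')) (Rmin_r (- eps) (- eps')). intros.
    apply RInt_Chasles_R; apply ex_RInt_fKa_neg; lra.
  - apply filterlim_plus_R; [apply Ineg_lim; auto|apply filterlim_const].
Qed.

Definition fKa_sym y := fKa y + fKa (- y).

Lemma PV_sub eps eps' : 0 < eps -> 0 < eps' ->
  (Ineg eps + Ipos eps) - (Ineg eps' + Ipos eps') = RInt fKa_sym eps eps'.
Proof.
  intros He He'.
  rewrite (Ipos_Chasles eps eps'), (Ineg_Chasles eps eps') by auto.
  unfold fKa_sym. rewrite RInt_plus_R.
  2: apply ex_RInt_fKa_pos; auto.
  2: { apply ex_RInt_continuous_R. intros y Hy. apply continuous_opp_arg, continuous_fKa.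
       assert (0 < Rmin eps eps') by (apply Rmin_glb_lt; auto). lra. }
  rewrite (RInt_ext (fun y => fKa (- y)) (fun y => fKa (0 - y))) by (intros; f_equal; ring).
  rewrite RInt_comp_sub_R by (apply ex_RInt_fKa_neg; lra).
  replace (0 - eps') with (- eps') by ring. replace (0 - eps) with (- eps) by ring.
  lra.
Qed.

(* The first-order cancellation [f (x - y) - f (x + y) = O(y)] kills the [1/y] singularity. *)
Lemma abs_fKa_sym_le y : 0 < y -> Rabs (fKa_sym y) <= 2 * M1 / PI.
Proof.
  intros Hy. assert (0 < PI) by apply PI_RGT_0. unfold fKa_sym, fKa.
  replace (x - - y) with (x + y) by ring. rewrite Ka_opp.
  replace (f (x - y) * Ka a y + f (x + y) * - Ka a y)
    with ((f (x - y) - f (x + y)) * Ka a y) by ring.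
  assert (Hd := abs_sub_le_of_Derive_bound f M1 f_derivable Df_bound (x + y) (x - y)).
  replace (x - y - (x + y)) with (- (2 * y)) in Hd by ring.
  rewrite Rabs_Ropp, (Rabs_right (2 * y)) in Hd by lra.
  destruct (Ka_bounds a y Hy) as [HK0 HK1].
  rewrite Rabs_mult, (Rabs_right (Ka a y)) by lra.
  apply Rle_trans with (M1 * (2 * y) * / (PI * y)).
  - apply Rmult_le_compat; auto using Rabs_pos.
  - right. field. lra.
Qed.

Lemma ex_lim_PV : exists L, filterlim (fun eps => Ineg eps + Ipos eps) (at_right 0) (locally L).
Proof.
  assert (0 < PI) by apply PI_RGT_0. assert (HM := M1_ge0).
  apply (ex_filterlim_of_increments_le _ (fun e => 2 * M1 / PI * e) 0 (fun e => 0 < e)).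
  - unfold at_right, within. apply filter_forall. auto.
  - intros u v Hu Hv. rewrite Rabs_minus_sym, PV_sub by auto.
    apply (abs_RInt_le_primitive fKa_sym (fun _ => 2 * M1 / PI) _ (fun e => 0 < e)); auto.
    + intros; lra.
    + intros y Hy. apply continuous_plus_R; [|apply continuous_opp_arg]; apply continuous_fKa; lra.
    + apply abs_fKa_sym_le.
    + intros y _. auto_derive; auto. ring.
    + intros; apply continuous_const.
  - apply (filterlim_filter_le_1 (F := locally 0)); [apply filter_le_within|].
    replace 0 with (2 * M1 / PI * 0) at 2 by ring.
    apply continuous_of_ex_derive. auto_derive. auto.
Qed.

Lemma abs_Gf_le y : 0 <= y <= 2 * x -> y <> x ->
  Rabs (Gf y) <= M1 * (- Pa a x - 2 * Pa a (2 * PI - x))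
                 + M1 * (2 / PI * sqrt a) / sqrt (Rabs (y - x)).
Proof.
  intros Hy Hyx. assert (0 < PI) by apply PI_RGT_0.
  unfold Gf. rewrite Rabs_mult.
  replace (M1 * (- Pa a x - 2 * Pa a (2 * PI - x)) + M1 * (2 / PI * sqrt a) / sqrt (Rabs (y - x)))
    with (M1 * ((- Pa a x - 2 * Pa a (2 * PI - x)) + 2 / PI * (sqrt a / sqrt (Rabs (y - x)))))
    by (unfold Rdiv; ring).
  apply Rmult_le_compat; auto using Rabs_pos, abs_GQ_le.
Qed.

Lemma ex_lim_RInt_Gf_left : exists I1, filterlim (fun c => RInt Gf 0 c) (at_left x) (locally I1).
Proof.
  assert (0 < PI) by apply PI_RGT_0.
  set (K0 := M1 * (- Pa a x - 2 * Pa a (2 * PI - x))). set (C := M1 * (2 / PI * sqrt a)).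
  set (Phi := fun y => K0 * y + - (2 * C) * sqrt (x - y)).
  apply (ex_lim_RInt_dominated Gf (fun y => K0 + C / sqrt (x - y)) Phi (fun y => 0 <= y < x))
    with (c := 0) (l := Phi x).
  - intros; lra.
  - intros y Hy. apply continuous_mult_R; [apply continuous_Df|].
    apply (continuous_GQ a x Ha); [intro; lra|apply Rabs_def1; lra].
  - intros y Hy. simpl. replace (x - y) with (Rabs (y - x)) by (rewrite Rabs_left; lra).
    apply abs_Gf_le; lra.
  - intros y Hy. unfold Phi. auto_derive; [lra|].
    assert (0 < sqrt (x - y)) by (apply sqrt_lt_R0; lra).
    replace (x + - y) with (x - y) by ring. field. lra.
  - intros y Hy. apply continuous_of_ex_derive. auto_derive.
    assert (0 < sqrt (x - y)) by (apply sqrt_lt_R0; lra).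
    replace (x + - y) with (x - y) by ring. repeat split; lra.
  - apply at_left_proper_filter.
  - simpl; lra.
  - apply (at_left_of_interval 0); [lra|]. intros; simpl; lra.
  - apply (filterlim_filter_le_1 (F := locally x)); [apply filter_le_within|].
    apply continuous_plus_R; [apply continuous_of_ex_derive; auto_derive; auto|].
    apply continuous_mult_R; [apply continuous_const|].
    apply continuous_sub_arg, continuity_pt_filterlim, continuity_pt_sqrt. lra.
Qed.

Lemma ex_lim_RInt_Gf_right :
  exists I2, filterlim (fun c => RInt Gf c (2 * x)) (at_right x) (locally I2).
Proof.
  assert (0 < PI) by apply PI_RGT_0.
  set (K0 := M1 * (- Pa a x - 2 * Pa a (2 * PI - x))). set (C := M1 * (2 / PI * sqrt a)).
  set (Phi := fun y => K0 * y + 2 * C * sqrt (y - x)).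
  apply (ex_lim_RInt_dominated_swap Gf (fun y => K0 + C / sqrt (y - x)) Phi
           (fun y => x < y <= 2 * x))
    with (c := 2 * x) (l := Phi x).
  - intros; lra.
  - intros y Hy. apply continuous_mult_R; [apply continuous_Df|].
    apply (continuous_GQ a x Ha); [intro; lra|apply Rabs_def1; lra].
  - intros y Hy. simpl. replace (y - x) with (Rabs (y - x)) by (rewrite Rabs_right; lra).
    apply abs_Gf_le; lra.
  - intros y Hy. unfold Phi. auto_derive; [lra|].
    assert (0 < sqrt (y - x)) by (apply sqrt_lt_R0; lra).
    replace (y + - x) with (y - x) by ring. field. lra.
  - intros y Hy. apply continuous_of_ex_derive. auto_derive.
    assert (0 < sqrt (y - x)) by (apply sqrt_lt_R0; lra).
    replace (y + - x) with (y - x) by ring. repeat split; lra.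
  - apply at_right_proper_filter.
  - simpl; lra.
  - apply (at_right_of_interval x (2 * x)); [lra|]. intros; simpl; lra.
  - apply (filterlim_filter_le_1 (F := locally x)); [apply filter_le_within|].
    apply continuous_plus_R; [apply continuous_of_ex_derive; auto_derive; auto|].
    apply continuous_mult_R; [apply continuous_const|].
    apply (continuous_comp_R (fun y => y - x)); [apply continuous_of_ex_derive; auto_derive; auto|].
    apply continuity_pt_filterlim, continuity_pt_sqrt. lra.
Qed.

Lemma PV_truncated_le eps : 0 < eps < x -> Ineg eps + Ipos eps <=
  RInt Gf 0 (x - eps) + RInt Gf (x + eps) (2 * x) + 2 * eps * M1 * (- Pa a x - Pa a (PI / 2)).
Proof.
  intros He. assert (0 < PI) by apply PI_RGT_0.
  set (B := RInt Gf 0 (x - eps) + RInt Gf (x + eps) (2 * x)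
            + 2 * eps * M1 * (- Pa a x - Pa a (PI / 2))).
  assert (Hu : is_lim_seq (fun N => RInt fKa eps (2 * PI * (INR N + 1) + x)
                                   + RInt fKa (x - 2 * PI * (INR N + 1)) (- eps))
                 (Ipos eps + Ineg eps)).
  { apply is_lim_seq_plus'.
    - apply (filterlim_comp _ _ _ (fun N => 2 * PI * (INR N + 1) + x) (fun B => RInt fKa eps B)
               _ (Rbar_locally p_infty)); [|apply Ipos_lim; lra].
      apply (is_lim_seq_ext (fun N => 2 * PI * INR N + (2 * PI + x))); [intros; ring|].
      apply is_lim_seq_affine_INR. lra.
    - apply (filterlim_comp _ _ _ (fun N => x - 2 * PI * (INR N + 1)) (fun A => RInt fKa A (- eps))
               _ (Rbar_locally m_infty)); [|apply Ineg_lim; lra].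
      apply (is_lim_seq_ext (fun N => - (2 * PI * INR N + (2 * PI - x)))); [intros; ring|].
      apply (is_lim_seq_opp _ p_infty), is_lim_seq_affine_INR. lra. }
  assert (Hv : is_lim_seq (fun N => B + 2 * x * M1 * (- Pa a (2 * PI * INR N + PI)))
                         (B + 2 * x * M1 * 0)).
  { apply is_lim_seq_plus'; [apply is_lim_seq_const|].
    apply (is_lim_seq_scal_l _ (2 * x * M1) 0), is_lim_seq_Pa_opp. }
  assert (Hn : forall N, RInt fKa eps (2 * PI * (INR N + 1) + x)
                         + RInt fKa (x - 2 * PI * (INR N + 1)) (- eps)
                         <= B + 2 * x * M1 * (- Pa a (2 * PI * INR N + PI)))
    by (intros N; generalize (RInt_fKa_truncated_le N eps He); unfold B; lra).
  assert (Hle := is_lim_seq_le _ _ _ _ Hn Hu Hv). simpl in Hle. lra.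
Qed.

Lemma is_Ha_of_lim L : filterlim (fun eps => Ineg eps + Ipos eps) (at_right 0) (locally L) ->
  is_Ha a f x L.
Proof.
  intros HL. exists Ineg, Ipos. split; [|exact HL].
  intros eps He. split.
  - apply (is_RInt_gen_to_point fKa (- eps) (Rbar_locally m_infty)); [|apply Ineg_lim, He].
    exists (- eps). intros A HA. apply ex_RInt_fKa_neg; lra.
  - apply (is_RInt_gen_from_point fKa eps (Rbar_locally p_infty)); [|apply Ipos_lim, He].
    exists eps. intros B HB. apply ex_RInt_fKa_pos; lra.
Qed.

Lemma Gf_eq y : y <> x -> Gf y = Derive f y * Ga a x y.
Proof. intros Hy. unfold Gf. rewrite GQ_eq_Ga; auto. Qed.

Lemma is_RInt_gen_left I1 : filterlim (fun c => RInt Gf 0 c) (at_left x) (locally I1) ->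
  is_RInt_gen (fun y => Derive f y * Ga a x y) (at_point 0) (at_left x) I1.
Proof.
  intros H1. assert (Hb : forall b, 0 < b < x -> forall y, Rmin 0 b < y < Rmax 0 b ->
                            Gf y = Derive f y * Ga a x y).
  { intros b Hb y Hy. rewrite Rmin_left, Rmax_right in Hy by lra. apply Gf_eq. lra. }
  apply (is_RInt_gen_from_point _ 0 (at_left x)).
  - apply (at_left_of_interval 0); [lra|]. intros b Hb'.
    apply (ex_RInt_ext Gf); [apply Hb, Hb'|apply ex_RInt_Gf; lra].
  - apply (filterlim_ext_loc (fun c => RInt Gf 0 c)); [|exact H1].
    apply (at_left_of_interval 0); [lra|]. intros b Hb'. apply RInt_ext, Hb, Hb'.
Qed.

Lemma is_RInt_gen_right I2 : filterlim (fun c => RInt Gf c (2 * x)) (at_right x) (locally I2) ->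
  is_RInt_gen (fun y => Derive f y * Ga a x y) (at_right x) (at_point (2 * x)) I2.
Proof.
  intros H2.
  assert (Hb : forall b, x < b < 2 * x -> forall y, Rmin b (2 * x) < y < Rmax b (2 * x) ->
                            Gf y = Derive f y * Ga a x y).
  { intros b Hb y Hy. rewrite Rmin_left, Rmax_right in Hy by lra. apply Gf_eq. lra. }
  apply (is_RInt_gen_to_point _ (2 * x) (at_right x)).
  - apply (at_right_of_interval x (2 * x)); [lra|]. intros b Hb'.
    apply (ex_RInt_ext Gf); [apply Hb, Hb'|apply ex_RInt_Gf; lra].
  - apply (filterlim_ext_loc (fun c => RInt Gf c (2 * x))); [|exact H2].
    apply (at_right_of_interval x (2 * x)); [lra|]. intros b Hb'. apply RInt_ext, Hb, Hb'.
Qed.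

Lemma PV_le L I1 I2 :
  filterlim (fun eps => Ineg eps + Ipos eps) (at_right 0) (locally L) ->
  filterlim (fun c => RInt Gf 0 c) (at_left x) (locally I1) ->
  filterlim (fun c => RInt Gf c (2 * x)) (at_right x) (locally I2) ->
  L <= I1 + I2.
Proof.
  intros HL H1 H2. set (C := - Pa a x - Pa a (PI / 2)).
  assert (HR : filterlim (fun e => RInt Gf 0 (x - e) + RInt Gf (x + e) (2 * x) + 2 * e * M1 * C)
                 (at_right 0) (locally (I1 + I2 + 2 * 0 * M1 * C))).
  { apply filterlim_plus_R; [apply filterlim_plus_R|].
    - apply (filterlim_comp _ _ _ (fun e => x - e) (fun c => RInt Gf 0 c) _ (at_left x));
        [apply filterlim_sub_at_right|exact H1].
    - apply (filterlim_comp _ _ _ (fun e => x + e) (fun c => RInt Gf c (2 * x)) _ (at_right x));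
        [apply filterlim_add_at_right|exact H2].
    - apply (filterlim_filter_le_1 (F := locally 0)); [apply filter_le_within|].
      apply (continuous_of_ex_derive (fun e => 2 * e * M1 * C) 0). auto_derive. auto. }
  assert (Hev : at_right 0 (fun e => Ineg e + Ipos e <=
                 RInt Gf 0 (x - e) + RInt Gf (x + e) (2 * x) + 2 * e * M1 * C))
    by (apply (at_right_of_interval 0 x); [lra|apply PV_truncated_le]).
  assert (Hle := filterlim_le (FF := Proper_StrongProper _ (at_right_proper_filter 0))
                   _ _ L (I1 + I2 + 2 * 0 * M1 * C) Hev HL HR).
  simpl in Hle. lra.
Qed.

Lemma Ha_le_integral_Ga : exists L I1 I2 : R,
  is_Ha a f x L /\
  is_RInt_gen (fun y => Derive f y * Ga a x y) (at_point 0) (at_left x) I1 /\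
  is_RInt_gen (fun y => Derive f y * Ga a x y) (at_right x) (at_point (2 * x)) I2 /\
  L <= I1 + I2.
Proof.
  destruct ex_lim_PV as [L HL].
  destruct ex_lim_RInt_Gf_left as [I1 H1].
  destruct ex_lim_RInt_Gf_right as [I2 H2].
  exists L, I1, I2. split; [|split; [|split]].
  - apply is_Ha_of_lim, HL.
  - apply is_RInt_gen_left, H1.
  - apply is_RInt_gen_right, H2.
  - apply PV_le; assumption.
Qed.

End HilbertBound.

Theorem lemma4p5 (a : R) (f : R -> R) :
  0 < a ->
  smooth_periodic f ->
  (forall x, f (- x) = f x) ->
  (forall x, 0 <= f x) ->
  f 0 = 0 ->
  (forall y, 0 <= y < PI -> 0 <= Derive f y) ->
  forall x, 0 < x <= PI / 2 ->
  exists L I1 I2 : R,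
    is_Ha a f x L /\
    is_RInt_gen (fun y => Derive f y * Ga a x y) (at_point 0) (at_left x) I1 /\
    is_RInt_gen (fun y => Derive f y * Ga a x y) (at_right x) (at_point (2 * x)) I2 /\
    L <= I1 + I2.
Proof.
  intros Ha [Hper [Hder Hbound]] Heven _ Hf0 Hmono x Hx.
  destruct (Hbound 0%nat) as [M0 HM0], (Hbound 1%nat) as [M1 HM1].
  apply (Ha_le_integral_Ga a f x M0 M1); auto.
  - intros y. apply (Hder 1%nat).
  - intros y. apply (Hder 2%nat).
Qed.
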